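(* Assume (A1), (A2), (A3), and that for each class $c\in[C]$ the revision protocol $\rho^c$ is an excess payoff or a pairwise comparison protocol. If $\mu\in X$ is a rest point of the master equation, i.e., $f^{c,d}_{s,u}(\mu)+f^{c,r}_{s,u}(\mu)=0$ for all $c\in[C]$, $s\in\mathcal S^c$, $u\in\mathcal U^c_D$, then $\mu$ is a mixed stationary Nash equilibrium.
   Context: Model: classes $c\in[C]$ with masses $m^c>0$, finite state sets $\mathcal S^c$, nonempty finite admissible action sets $\mathcal A^c(s)$ ($\mathcal A^c=\bigcup_s\mathcal A^c(s)$), transition kernels $\phi^c(\cdot\mid s,a)\in\mathcal P(\mathcal S^c)$, action rates $\lambda^c>0$; $p=\sum_c|\mathcal S^c|,q=\sum_c|\mathcal A^c|$. $\mathcal U^c_D$ = deterministic policies ($s\mapsto u(s)\in\mathcal A^c(s)$; $u(a\mid s)=\mathbf 1[a=u(s)]$), $n^c=|\mathcal U^c_D|$. $\phi^{c,u}_{ss'}=\phi^c(s\mid s',u(s'))$. (A2): for all $c,u\in\mathcal U^c_D$, $\phi^{c,u}$ has exactly one recurrent communicating class; $\eta^{c,u}$ is the unique stationary distribution of the continuous-time chain with generator $\lambda^c(\phi^{c,u}-I)$. $X=\prod_c\{\mu^c\in\mathbb R_{\ge0}^{\mathcal S^c\times\mathcal U^c_D}:\sum\mu^c=m^c\}$, $X_{\mathcal S\times\mathcal A}=\prod_c\{\nu\in\mathbb R_{\ge0}^{\mathcal S^c\times\mathcal A^c}:\sum\nu=m^c\}$, $X^c_{\mathcal U_D}=\{\sigma\in\mathbb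 R^{n^c}_{\ge0}:\sum\sigma=m^c\}$; $\mu^c_{\mathcal S\times\mathcal A}[s,a]=\sum_u\mu^c[s,u]u(a\mid s)$; $\mu^c[\mathcal S^c,u]=\sum_s\mu^c[s,u]$, $\mu^c[\mathcal S^c,\cdot]=(\mu^c[\mathcal S^c,u])_u$. Rewards $r^c:\mathcal S^c\times\mathcal A^c\times X_{\mathcal S\times\mathcal A}\to\mathbb R$; (A1): each $r^c(s,a,\cdot)$ extends to $\mathbb R^{pq}_{\ge0}$ with an extension continuously differentiable on $X_{\mathcal S\times\mathcal A}$. $F^c_u(\mu)=\sum_{s}\sum_{a\in\mathcal A^c(s)}\eta^{c,u}(s)u(a\mid s)r^c(s,a,\mu_{\mathcal S\times\mathcal A})$, $F^c(\mu)=(F^c_u(\mu))_u$. MSNE: $\mu\in X$ with, for all $c,u$: (i) $\mu^c[\mathcal S^c,u]>0\Rightarrow F^c_u(\mu)\ge F^c_v(\mu)\ \forall v\in\mathcal U^c_D$; (ii) $\mu^c[s,u]=\eta^{c,u}(s)\mu^c[\mathcal S^c,u]$ for all $s$. Revision protocol of class $c$: $\rho^c:\mathbb R^{n^c}\times X^c_{\mathcal U_D}\to\mathbb R^{n^c\times n^c}_{\ge0}$ with revision rate $R^c>0$; (A3): $\rho^c$ Lipschitz and $R^c\ge\sup_{\mu\in X}\sum_{v\ne u}\rho^c_{uv}(F^c(\mu),\mu^c[\mathcal S^c,\cdot])$ for all $u$. Excess payoff: $\rho^c_{uv}(F,\sigma)=\tau^c_v(\hat F)$ with $\hat F=F-\mathbf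 1F^\top\sigma/m^c$ and $\tau^c:\mathbb R^{n^c}\to\mathbb R^{n^c}_{\ge0}$ Lipschitz with $\hat F\notin\mathbb R^{n^c}_{\le0}\Rightarrow\tau^c(\hat F)^\top\hat F>0$; pairwise comparison: $\rho^c_{uv}(F,\sigma)=\tau^c_{uv}(F)$ with $\tau^c$ Lipschitz, nonnegative and $\mathrm{sign}(\tau^c_{uv}(F))=\mathrm{sign}(\max(0,F_v-F_u))$. Master equation vector fields: $f^{c,d}_{s,u}(\mu)=\lambda^c\sum_{s'}\sum_{a'\in\mathcal A^c(s')}\phi^c(s\mid s',a')u(a'\mid s')\mu^c[s',u]-\lambda^c\mu^c[s,u]$; $f^{c,r}_{s,u}(\mu)=\sum_{u'}\mu^c[s,u']\rho^c_{u'u}(F^c(\mu),\mu^c[\mathcal S^c,\cdot])-\mu^c[s,u]\sum_{u'}\rho^c_{uu'}(F^c(\mu),\mu^c[\mathcal S^c,\cdot])$. *)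

From HB Require Import structures.
From mathcomp Require Import all_boot all_order all_algebra.
From mathcomp Require Import all_classical all_reals all_analysis.
Import Order.TTheory GRing.Theory Num.Theory.
Import numFieldNormedType.Exports.
Local Open Scope classical_set_scope.
Local Open Scope ring_scope.

(* The data of the model: C classes (indexed by 'I_C), for each class c
   a finite state set S^c, a finite action set A^c, admissible action
   sets A^c(s), a transition kernel phi^c(. | s, a), an action rate
   lambda^c, a mass m^c and a reward r^c(s, a, nu) where nu is a
   state-action population distribution (an element of R^{SA}, SA being
   the disjoint union over c of S^c x A^c). *)
Record model (R : realType) := Model {
  ncls : nat;
  St : 'I_ncls -> finType;
  Act : 'I_ncls -> finType;
  adm : forall c : 'I_ncls, St c -> {set Act c};
  (* kern c s a s2 = phi^c(s2 | s, a) *)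
  kern : forall c : 'I_ncls, St c -> Act c -> St c -> R;
  lam : 'I_ncls -> R;
  mass : 'I_ncls -> R;
  rew : forall c : 'I_ncls, St c -> Act c ->
          ({c' : 'I_ncls & (St c' * Act c')%type} -> R) -> R
}.

Arguments ncls {R}.
Arguments St {R}.
Arguments Act {R}.
Arguments adm {R}.
Arguments kern {R}.
Arguments lam {R}.
Arguments mass {R}.
Arguments rew {R}.

Set Implicit Arguments.
Unset Strict Implicit.
Unset Printing Implicit Defensive.

Section Defs.
Variable R : realType.
Variable M : model R.

Local Notation C := (ncls M).
Local Notation S := (St M).
Local Notation A := (Act M).

Definition SA : finType := {c : 'I_C & (S c * A c)%type}.

Definition pol (c : 'I_C) : finType :=
  {u : {ffun S c -> A c} | [forall s, u s \in adm M c s]}.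

Definition pdet (c : 'I_C) (u : pol c) (s : S c) (a : A c) : R :=
  ((a == val u s) : nat)%:R.

Definition popstate := forall c : 'I_C, S c -> pol c -> R.

Definition inX (mu : popstate) : Prop :=
  forall c, (forall s u, 0 <= mu c s u) /\
            \sum_(s : S c) \sum_(u : pol c) mu c s u = mass M c.

Definition inXSA (nu : SA -> R) : Prop :=
  forall c : 'I_C, (forall s a, 0 <= nu (existT _ c (s, a))) /\
     \sum_(s : S c) \sum_(a : A c) nu (existT _ c (s, a)) = mass M c.

Definition inXU (c : 'I_C) (sg : pol c -> R) : Prop :=
  (forall u, 0 <= sg u) /\ \sum_(u : pol c) sg u = mass M c.

Definition muSA (mu : popstate) : SA -> R :=
  fun x => \sum_(u : pol (tag x))
             mu (tag x) (tagged x).1 u * pdet u (tagged x).1 (tagged x).2.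

Definition muS (mu : popstate) (c : 'I_C) (u : pol c) : R :=
  \sum_(s : S c) mu c s u.

Definition vecSA (nu : SA -> R) : 'rV[R]_#|SA| := \row_i nu (enum_val i).

Definition A1 : Prop :=
  forall c (s : S c) (a : A c), exists g : 'rV[R]_#|SA| -> R,
    (forall nu, inXSA nu -> g (vecSA nu) = rew M c s a nu) /\
    (forall nu, inXSA nu -> differentiable g (vecSA nu)) /\
    (forall v : 'rV[R]_#|SA|, {within vecSA @` inXSA, continuous ('D_v g)}).

Definition trans (c : 'I_C) (u : pol c) : rel (S c) :=
  fun s' s => 0 < kern M c s' (val u s') s.

Definition recurrent (c : 'I_C) (u : pol c) (s : S c) : Prop :=
  forall t, connect (trans u) s t -> connect (trans u) t s.

Definition A2 : Prop :=
  forall c (u : pol c),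
    (exists s, recurrent u s) /\
    (forall s t, recurrent u s -> recurrent u t -> connect (trans u) s t).

(* eta is a stationary distribution of the generator lambda^c (phi^{c,u} - I)
   (under (A2) it is the unique one, eta^{c,u}) *)
Definition stationary (c : 'I_C) (u : pol c) (eta : S c -> R) : Prop :=
  (forall s, 0 <= eta s) /\ \sum_(s : S c) eta s = 1 /\
  forall s : S c, \sum_(s' : S c)
     lam M c * (kern M c s' (val u s') s - ((s == s') : nat)%:R) * eta s' = 0.

Definition etatype := forall c : 'I_C, pol c -> S c -> R.

Definition Fpay (eta : etatype) (mu : popstate) (c : 'I_C) (u : pol c) : R :=
  \sum_(s : S c) \sum_(a in adm M c s)
     eta c u s * pdet u s a * rew M c s a (muSA mu).

Definition MSNE (eta : etatype) (mu : popstate) : Prop :=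
  inX mu /\
  forall c (u : pol c),
    (0 < muS mu u -> forall v : pol c, Fpay eta mu v <= Fpay eta mu u) /\
    (forall s, mu c s u = eta c u s * muS mu u).

Definition supn (T : finType) (f : T -> R) : R := \big[Num.max/0]_(t : T) `|f t|.

Definition protocol := forall c : 'I_C,
  (pol c -> R) -> (pol c -> R) -> pol c -> pol c -> R.

Definition A3 (eta : etatype) (rho : protocol) (c : 'I_C) (Rc : R) : Prop :=
  (exists L : R, forall F1 F2 sg1 sg2, inXU sg1 -> inXU sg2 -> forall u v,
     `|rho c F1 sg1 u v - rho c F2 sg2 u v|
       <= L * (supn (fun w => F1 w - F2 w) + supn (fun w => sg1 w - sg2 w))) /\
  (forall F sg u v, inXU sg -> 0 <= rho c F sg u v) /\
  0 < Rc /\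
  (forall mu, inX mu -> forall u : pol c,
     \sum_(v : pol c | v != u) rho c (@Fpay eta mu c) (@muS mu c) u v <= Rc).

Definition excess_payoff (rho : protocol) (c : 'I_C) : Prop :=
  exists tau : (pol c -> R) -> pol c -> R,
    (exists L : R, forall x y v, `|tau x v - tau y v| <= L * supn (fun w => x w - y w)) /\
    (forall x v, 0 <= tau x v) /\
    (forall Fh, ~ (forall v, Fh v <= 0) -> 0 < \sum_(v : pol c) tau Fh v * Fh v) /\
    (forall F sg u v, inXU sg ->
       rho c F sg u v =
       tau (fun w => F w - (\sum_(w' : pol c) F w' * sg w') / mass M c) v).

Definition pairwise_comparison (rho : protocol) (c : 'I_C) : Prop :=
  exists tau : (pol c -> R) -> pol c -> pol c -> R,
    (exists L : R, forall x y u v,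
        `|tau x u v - tau y u v| <= L * supn (fun w => x w - y w)) /\
    (forall x u v, 0 <= tau x u v) /\
    (forall F u v, Num.sg (tau F u v) = Num.sg (Num.max 0 (F v - F u))) /\
    (forall F sg u v, inXU sg -> rho c F sg u v = tau F u v).

Definition fd (mu : popstate) (c : 'I_C) (s : S c) (u : pol c) : R :=
  lam M c * \sum_(s' : S c) \sum_(a' in adm M c s')
      kern M c s' a' s * pdet u s' a' * mu c s' u
  - lam M c * mu c s u.

Definition fr (eta : etatype) (rho : protocol) (mu : popstate)
    (c : 'I_C) (s : S c) (u : pol c) : R :=
  \sum_(u' : pol c) mu c s u' * rho c (@Fpay eta mu c) (@muS mu c) u' u
  - mu c s u * \sum_(u' : pol c) rho c (@Fpay eta mu c) (@muS mu c) u u'.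

End Defs.

From HB Require Import structures.
From mathcomp Require Import all_boot all_order all_algebra.
From mathcomp Require Import all_classical all_reals all_analysis.
From mathcomp Require Import ring lra.
Import Order.TTheory GRing.Theory Num.Theory.

Set Implicit Arguments.
Unset Strict Implicit.
Unset Printing Implicit Defensive.

Local Open Scope ring_scope.

(* At a rest point, summing the master equation over states cancels the Markov
   part and leaves a balance of revision flows between the policy masses
   mu^c[S^c, .].  For an excess payoff protocol the balance makes the revision
   rates proportional to the masses, so positive correlation forces every excess
   payoff to be nonpositive and to vanish on the support; a perturbation argument
   based on the Lipschitz bound shows moreover that a nonzero flow lives on a
   single policy.  For a pairwise comparison protocol, the worst supported policy
   can have no outflow and is therefore optimal.  In both cases the flow balance
   then holds for every vector supported by the policy masses, in particular for
   mu^c[s, .] at each state s, so the revision part of the master equation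
   vanishes state by state.  What remains says that mu^c[., u] is invariant for the
   chain phi^{c,u}; with a single recurrent class, harmonic functions are constant
   (maximum principle), hence by duality invariant vectors are unique up to scale,
   and mu^c[., u] = eta^{c,u} mu^c[S^c, u]. *)

Section MarkovChain.
Variables (R : realFieldType) (T : finType) (P : T -> T -> R).

Definition pos_step : rel T := fun a b => 0 < P a b.

Definition recurrent_state (s : T) : Prop :=
  forall t, connect pos_step s t -> connect pos_step t s.

Definition unique_recurrent_class : Prop :=
  (exists s, recurrent_state s) /\
  (forall s t, recurrent_state s -> recurrent_state t -> connect pos_step s t).

Definition harmonic (h : T -> R) : Prop := forall a, \sum_b P a b * h b = h a.

Definition invariant (x : T -> R) : Prop := forall t, \sum_s P s t * x s = x t.

(* A reachable state with the fewest reachable states is recurrent. *)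
Lemma exists_recurrent_reachable s :
  exists2 r, connect pos_step s r & recurrent_state r.
Proof.
pose reach t := [set x | connect pos_step t x].
have [r sr rmin] := arg_minnP (fun t => #|reach t|) (connect0 pos_step s).
exists r => // t rt.
have sub_tr : reach t \subset reach r.
  by apply/fintype.subsetP => x; rewrite !inE; exact: connect_trans.
suff : r \in reach t by rewrite inE.
have /eqP -> : reach t == reach r.
  by rewrite -(subset_leqif_cards sub_tr) eqn_leq (subset_leq_card sub_tr) rmin //;
     exact: connect_trans sr rt.
by rewrite inE connect0.
Qed.

Hypotheses (P_ge0 : forall a b, 0 <= P a b) (P_sum1 : forall a, \sum_b P a b = 1).

Lemma harmonic_max_step h a b :
  harmonic h -> (forall t, h t <= h a) -> pos_step a b -> h b = h a.
Proof.
move=> harm hmax Pab.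
have gap_sum : \sum_t P a t * (h a - h t) = 0.
  under eq_bigr => t _ do rewrite mulrBr.
  by rewrite sumrB harm -mulr_suml P_sum1 mul1r subrr.
have gap_ge0 : forall t, true -> 0 <= P a t * (h a - h t).
  by move=> t _; rewrite mulr_ge0 // subr_ge0.
have /eqP := psumr_eq0P gap_ge0 gap_sum (i := b) isT.
by rewrite mulf_eq0 (gt_eqF Pab) subr_eq0 => /eqP.
Qed.

Lemma harmonic_max_connect h a b :
  harmonic h -> (forall t, h t <= h a) -> connect pos_step a b -> h b = h a.
Proof.
move=> harm hmax /connectP[p Hp ->] {b}.
elim: p a hmax Hp => [|x p IH] a hmax //= /andP[ax Hp].
have hxa := harmonic_max_step harm hmax ax.
by rewrite -hxa IH // => t; rewrite hxa.
Qed.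

Hypothesis unique_rec : unique_recurrent_class.

Lemma harmonic_max_recurrent h r :
  harmonic h -> recurrent_state r -> forall t, h t <= h r.
Proof.
move=> harm rec_r.
have [i _ imax] := @arg_maxP _ R T r predT h isT.
have {}imax : forall t, h t <= h i by move=> t; exact: imax.
have [r' ir' rec_r'] := exists_recurrent_reachable i.
have hr' := harmonic_max_connect harm imax ir'.
have r'max : forall t, h t <= h r' by move=> t; rewrite hr'.
by move=> t; rewrite (harmonic_max_connect harm r'max (unique_rec.2 _ _ rec_r' rec_r)).
Qed.

Lemma harmonic_const h : harmonic h -> forall a b, h a = h b.
Proof.
move=> harm.
have [r rec_r] := unique_rec.1.
have harmN : harmonic (fun t => - h t).
  by move=> a; rewrite -harm -sumrN; apply: eq_bigr => b _; rewrite mulrN.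
suff hr : forall t, h t = h r by move=> a b; rewrite !hr.
move=> t; apply/eqP; rewrite eq_le harmonic_max_recurrent //=.
by rewrite -lerN2 (harmonic_max_recurrent harmN rec_r).
Qed.

Local Notation n := #|T|.

Definition chain_mx : 'M[R]_n := \matrix_(i, j) P (enum_val i) (enum_val j).

Definition row_of (f : T -> R) : 'rV[R]_n := \row_j f (enum_val j).

Lemma sum_enum_val (f : T -> R) : \sum_(i < n) f (enum_val i) = \sum_t f t.
Proof. by rewrite -(big_enum_val (A := T)). Qed.

Lemma invariant_kermx x : invariant x -> (row_of x <= kermx (chain_mx - 1%:M))%MS.
Proof.
move=> inv_x; apply/sub_kermxP; rewrite mulmxBr mulmx1; apply/eqP; rewrite subr_eq0.
apply/eqP/rowP => j; rewrite !mxE -inv_x -sum_enum_val.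
by apply: eq_bigr => i _; rewrite !mxE mulrC.
Qed.

Lemma kermx_tr_const : (kermx (chain_mx - 1%:M)^T <= (const_mx 1 : 'rV[R]_n))%MS.
Proof.
apply/row_subP => i; move: (row_sub i (kermx (chain_mx - 1%:M)^T)).
move: (row i _) => v /sub_kermxP.
rewrite linearB /= trmx1 mulmxBr mulmx1 => /eqP; rewrite subr_eq0 => /eqP v_fix.
pose h t := v 0 (enum_rank t).
have harm : harmonic h.
  move=> a; rewrite /h; move/rowP: v_fix => /(_ (enum_rank a)); rewrite !mxE => <-.
  rewrite -sum_enum_val; apply: eq_bigr => j _.
  by rewrite !mxE enum_valK enum_rankK mulrC.
have [r _] := unique_rec.1.
have -> : v = h r *: const_mx 1.
  apply/rowP => j; rewrite !mxE mulr1 -(harmonic_const harm (enum_val j) r).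
  by rewrite /h enum_valK.
exact: scalemx_sub.
Qed.

(* The left and right kernels of [chain_mx - 1] have the same dimension. *)
Lemma rank_kermx_le1 : (\rank (kermx (chain_mx - 1%:M)) <= 1)%N.
Proof.
rewrite mxrank_ker -(mxrank_tr (chain_mx - _)) -mxrank_ker.
exact: leq_trans (mxrank_leqif_sup kermx_tr_const).1 (rank_leq_row _).
Qed.

Lemma invariant_unique x e :
  invariant x -> invariant e -> \sum_s e s = 1 -> forall t, x t = (\sum_s x s) * e t.
Proof.
move=> inv_x inv_e e_sum1.
have e_ne0 : row_of e != 0.
  apply/eqP => /rowP e0; move: e_sum1; rewrite -sum_enum_val big1 => [/eqP|j _].
    by rewrite eq_sym oner_eq0.
  by have := e0 j; rewrite !mxE.
have ker_e : (kermx (chain_mx - 1%:M) <= row_of e)%MS.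
  rewrite -(geq_leqif (mxrank_leqif_sup (invariant_kermx inv_e))).
  by rewrite (leq_trans rank_kermx_le1) // lt0n mxrank_eq0.
have /submxP [d xde] := submx_trans (invariant_kermx inv_x) ker_e.
have x_de t : x t = d 0 0 * e t.
  by have /rowP /(_ (enum_rank t)) := xde; rewrite !mxE big_ord1 !mxE enum_rankK.
have -> : \sum_s x s = d 0 0.
  by under eq_bigr => s _ do rewrite x_de; rewrite -mulr_sumr e_sum1 mulr1.
exact: x_de.
Qed.

End MarkovChain.

Section Balance.
Variables (R : realType) (U : finType).

Definition balanced (sg : U -> R) (r : U -> U -> R) : Prop :=
  forall u, \sum_u' sg u' * r u' u = sg u * \sum_u' r u u'.

Definition optimal_on_support (sg F : U -> R) : Prop :=
  forall u, 0 < sg u -> forall v, F v <= F u.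

Lemma supn_le (f : U -> R) b : 0 <= b -> (forall t, `|f t| <= b) -> supn f <= b.
Proof.
move=> b_ge0 fb; apply: (big_ind (fun y => y <= b)) => // y z.
by rewrite ge_max => -> ->.
Qed.

Lemma supn_ge0 (f : U -> R) : 0 <= supn f.
Proof. by apply: (big_ind (fun y => 0 <= y)) => // y z y0 _; rewrite le_max y0. Qed.

Lemma exists_pos_of_sum_pos (sg : U -> R) : 0 < \sum_u sg u -> exists u, 0 < sg u.
Proof.
move=> sum_gt0; apply/existsP; apply: contraLR sum_gt0; rewrite negb_exists -leNgt.
by move=> /forallP sg_le0; apply: sumr_le0 => u _; rewrite leNgt.
Qed.

End Balance.

Section ExcessPayoff.
Variables (R : realType) (U : finType) (tau : (U -> R) -> U -> R) (L : R).
Hypothesis tau_lip :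
  forall x y v, `|tau x v - tau y v| <= L * supn (fun w => x w - y w).
Hypothesis tau_ge0 : forall x v, 0 <= tau x v.
Hypothesis tau_pos_corr :
  forall x, ~ (forall v, x v <= 0) -> 0 < \sum_v tau x v * x v.

(* Raise the payoff of [v] by [eps] and lower that of [w] by [2 eps]: positive
   correlation forces [tau v > 2 tau w] at the perturbed point, and the
   Lipschitz bound transfers this to the limit [eps -> 0]. *)
Lemma tau_double_le_at_zeros x v w : (forall k, x k <= 0) -> v != w ->
  x v = 0 -> x w = 0 -> 2 * tau x w <= tau x v.
Proof.
move=> x_le0 vw xv0 xw0; apply/ler_addgt0Pr => e e_gt0.
have L_ge0 : 0 <= `|L| by [].
pose eps := e / (6 * `|L| + 6).
have eps_gt0 : 0 < eps by rewrite divr_gt0 // ltr_wpDl ?mulr_ge0.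
have epsE : eps * (6 * `|L| + 6) = e by rewrite divfK // gt_eqF // ltr_wpDl ?mulr_ge0.
pose d k : R := (if k == v then eps else 0) - (if k == w then 2 * eps else 0).
pose y k := x k + d k.
have dv : d v = eps by rewrite /d eqxx (negPf vw) subr0.
have dw : d w = - (2 * eps) by rewrite /d eqxx eq_sym (negPf vw) sub0r.
have near k : `|tau y k - tau x k| <= `|L| * (2 * eps).
  apply: le_trans (tau_lip y x k) _.
  have sup_le : supn (fun k => y k - x k) <= 2 * eps.
    apply: supn_le => [|k']; first lra.
    rewrite /y addrC addKr /d.
    by case: (k' == v); case: (k' == w); apply/ler_normlP; split; lra.
  have := supn_ge0 (fun k => y k - x k); have := ler_norm L; nra.
have corr_gt0 : 0 < \sum_k tau y k * y k.
  by apply: tau_pos_corr => y_le0; have := y_le0 v; rewrite /y xv0 dv add0r; lra.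
have corr_le : \sum_k tau y k * y k <= tau y v * eps - tau y w * (2 * eps).
  apply: (@le_trans _ _ (\sum_k tau y k * d k)).
    apply: ler_sum => k _; rewrite {2}/y mulrDr.
    by have := mulr_ge0_le0 (tau_ge0 y k) (x_le0 k); lra.
  rewrite (bigD1 v) //= (bigD1 w) 1?eq_sym //= big1 ?addr0 ?dv ?dw ?mulrN //.
  by move=> k /andP[kw kv]; rewrite /d (negPf kv) (negPf kw) subr0 mulr0.
have yv_gt : 0 < tau y v - 2 * tau y w.
  rewrite -(pmulr_lgt0 _ eps_gt0); have := lt_le_trans corr_gt0 corr_le; lra.
have /ler_normlP[_ near_v] := near v; have /ler_normlP[near_w _] := near w.
have eE : e = 6 * (`|L| * eps) + 6 * eps by rewrite -epsE; ring.
have L2 : `|L| * (2 * eps) = 2 * (`|L| * eps) by ring.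
rewrite L2 in near_v near_w; rewrite eE.
by move: (`|L| * eps) near_v near_w => q; lra.
Qed.

Section BalancedPoint.
Variables (sg F : U -> R) (m : R).
Hypotheses (m_gt0 : 0 < m) (sg_ge0 : forall u, 0 <= sg u) (sg_sum : \sum_u sg u = m).

Let excess : U -> R := fun w => F w - (\sum_w' F w' * sg w') / m.
Let total_rate := \sum_u tau excess u.

Lemma excess_mean_zero : \sum_v sg v * excess v = 0.
Proof.
rewrite /excess; under eq_bigr => v _ do rewrite mulrBr.
rewrite sumrB -mulr_suml sg_sum mulrCA divff ?gt_eqF // mulr1.
by apply/eqP; rewrite subr_eq0; apply/eqP; apply: eq_bigr => v _; rewrite mulrC.
Qed.

Hypothesis sg_bal : balanced sg (fun _ => tau excess).

Lemma tau_excess_proportional u : tau excess u = sg u * total_rate / m.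
Proof. by rewrite -(sg_bal u) -mulr_suml sg_sum mulrAC divff ?gt_eqF // mul1r. Qed.

Lemma excess_le0 v : excess v <= 0.
Proof.
have corr0 : \sum_v tau excess v * excess v = 0.
  transitivity (\sum_v' total_rate / m * (sg v' * excess v')).
    by apply: eq_bigr => v' _; rewrite tau_excess_proportional; ring.
  by rewrite -mulr_sumr excess_mean_zero mulr0.
by move: v; apply: (contra_notP (@tau_pos_corr excess)); rewrite corr0 ltxx.
Qed.

Lemma excess_support u : 0 < sg u -> excess u = 0.
Proof.
move=> sg_u; have sum0 : \sum_w sg w * - excess w = 0.
  by under eq_bigr => w _ do rewrite mulrN; rewrite sumrN excess_mean_zero oppr0.
have term_ge0 w : true -> 0 <= sg w * - excess w.
  by move=> _; rewrite mulr_ge0 // oppr_ge0 excess_le0.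
have /eqP := psumr_eq0P term_ge0 sum0 (i := u) isT.
by rewrite mulf_eq0 gt_eqF //= oppr_eq0 => /eqP.
Qed.

Lemma excess_payoff_optimal : optimal_on_support sg F.
Proof.
move=> u sg_u v; have := excess_le0 v; have := excess_support sg_u.
by rewrite /excess; lra.
Qed.

Lemma support_single : total_rate != 0 -> forall v w, 0 < sg v -> 0 < sg w -> v = w.
Proof.
move=> rate_ne0 v w sg_v sg_w; apply/eqP; apply: contraT => vw.
have double_le a b : a != b -> 0 < sg a -> 0 < sg b -> 2 * tau excess b <= tau excess a.
  by move=> ab sg_a sg_b; apply: tau_double_le_at_zeros;
     rewrite ?excess_support //; exact: excess_le0.
have w_le := double_le v w vw sg_v sg_w.
have wv : w != v by rewrite eq_sym.
have v_le := double_le w v wv sg_w sg_v.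
have /eqP : tau excess v = 0.
  by have := tau_ge0 excess v; have := tau_ge0 excess w; lra.
rewrite tau_excess_proportional !mulf_eq0 invr_eq0 (gt_eqF sg_v) (gt_eqF m_gt0).
by rewrite (negPf rate_ne0).
Qed.

Lemma excess_payoff_balanced_support y :
  (forall u, sg u = 0 -> y u = 0) -> balanced y (fun _ => tau excess).
Proof.
move=> y_supp u; rewrite -mulr_suml tau_excess_proportional -/total_rate.
have [-> | rate_ne0] := eqVneq total_rate 0; first by rewrite !(mulr0, mul0r).
have [u0 sg_u0] : exists u0, 0 < sg u0 by apply: exists_pos_of_sum_pos; rewrite sg_sum.
have sg_off v : v != u0 -> sg v = 0.
  move=> vu0; have := sg_ge0 v; rewrite le_eqVlt => /orP[/eqP <- // | sg_v].
  by rewrite (support_single rate_ne0 sg_v sg_u0) eqxx in vu0.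
have sum_off (f : U -> R) : (forall v, v != u0 -> f v = 0) -> \sum_v f v = f u0.
  by move=> f_off; rewrite (bigD1 u0) //= big1 ?addr0 // => v /f_off.
rewrite (sum_off y) => [|v /sg_off]; last exact: y_supp.
have [-> | uu0] := eqVneq u u0.
  by rewrite -(sum_off sg sg_off) sg_sum mulrAC divff ?gt_eqF // mul1r.
by rewrite sg_off // (y_supp u) ?sg_off // !(mulr0, mul0r).
Qed.

End BalancedPoint.
End ExcessPayoff.

Section PairwiseComparison.
Variables (R : realType) (U : finType) (tau : (U -> R) -> U -> U -> R).
Hypothesis tau_ge0 : forall x u v, 0 <= tau x u v.
Hypothesis tau_sign :
  forall x u v, Num.sg (tau x u v) = Num.sg (Num.max 0 (x v - x u)).

Lemma tau_eq0_of_le F u v : F v <= F u -> tau F u v = 0.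
Proof.
by move=> Fvu; apply/eqP; rewrite -sgr_eq0 tau_sign max_l ?sgr0 // subr_le0.
Qed.

Lemma tau_gt0_of_lt F u v : F u < F v -> 0 < tau F u v.
Proof.
move=> Fuv; have d_gt0 : 0 < F v - F u by rewrite subr_gt0.
by rewrite lt_def tau_ge0 andbT -sgr_eq0 tau_sign max_r ?ltW // gtr0_sg // oner_eq0.
Qed.

Variables (sg F : U -> R).
Hypotheses (sg_ge0 : forall u, 0 <= sg u) (sg_bal : balanced sg (tau F)).

(* The worst supported strategy receives no revision flow from the support, so by
   balance it has no outflow either: no strategy is strictly better than it. *)
Lemma pairwise_comparison_optimal : optimal_on_support sg F.
Proof.
move=> u sg_u.
have [u0 sg_u0 u0_min] := @arg_minP _ R U u (fun u => 0 < sg u) F sg_u.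
suff u0_max v : F v <= F u0 by move=> v; exact: le_trans (u0_max v) (u0_min u sg_u).
rewrite leNgt; apply/negP => Fv_gt.
have inflow0 : \sum_u' sg u' * tau F u' u0 = 0.
  apply: big1 => u' _; have := sg_ge0 u'; rewrite le_eqVlt => /orP[/eqP <- | sg_u'].
    by rewrite mul0r.
  by rewrite tau_eq0_of_le ?mulr0 // u0_min.
have : 0 < sg u0 * \sum_u' tau F u0 u'.
  rewrite mulr_gt0 // (bigD1 v) //= (lt_le_trans (tau_gt0_of_lt Fv_gt)) // lerDl.
  exact: sumr_ge0.
by rewrite -sg_bal inflow0 ltxx.
Qed.

Lemma pairwise_comparison_balanced_support y :
  (forall u, sg u = 0 -> y u = 0) -> balanced y (tau F).
Proof.
move=> y_supp u.
have off_support u' : y u' != 0 -> forall v, tau F u' v = 0.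
  move=> yu' v; apply: tau_eq0_of_le; apply: pairwise_comparison_optimal.
  by rewrite lt_def (contra_neq (y_supp u')) // sg_ge0.
rewrite big1 => [|u' _].
  by have [-> | /off_support tau0] := eqVneq (y u) 0; rewrite ?mul0r // big1 ?mulr0.
by have [-> | /off_support ->] := eqVneq (y u') 0; rewrite ?mul0r ?mulr0.
Qed.

End PairwiseComparison.

Section RestPoint.
Variables (R : realType) (M : model R) (eta : etatype M) (rho : protocol M).
Variables (mu : popstate M) (c : 'I_(ncls M)).
(* Implicit-argument inference would otherwise hide the class index of [mu] and [rho]. *)
Arguments mu : clear implicits.
Arguments rho : clear implicits.

Local Notation sg := (@muS R M mu c).
Local Notation F := (@Fpay R M eta mu c).
Local Notation policy_chain u := (fun a b => kern M c a (val u a) b).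

Lemma pol_adm (u : pol c) s : val u s \in adm M c s.
Proof. by have /forallP := valP u; apply. Qed.

Lemma fdE s (u : pol c) : fd mu s u =
  lam M c * (\sum_s' policy_chain u s' s * mu c s' u) - lam M c * mu c s u.
Proof.
congr (_ * _ - _); apply: eq_bigr => s' _.
rewrite (bigD1 (val u s')) ?pol_adm //= big1 ?addr0 => [|a /andP[_ /negPf ua]].
  by rewrite /pdet eqxx mulr1.
by rewrite /pdet ua mulr0 mul0r.
Qed.

Lemma fr_balanced s :
  balanced (fun u => mu c s u) (rho c F sg) -> forall u, fr eta rho mu s u = 0.
Proof. by move=> bal u; rewrite /fr bal subrr. Qed.

Lemma sum_fr (u : pol c) : \sum_s fr eta rho mu s u =
  \sum_u' sg u' * rho c F sg u' u - sg u * \sum_u' rho c F sg u u'.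
Proof.
rewrite /fr sumrB exchange_big /= /muS mulr_suml; congr (_ - _).
by apply: eq_bigr => u' _; rewrite mulr_suml.
Qed.

Hypothesis mu_X : inX mu.

Lemma muS_ge0 u : 0 <= sg u.
Proof. by apply: sumr_ge0 => s _; apply: (mu_X c).1. Qed.

Lemma muS_sum : \sum_u sg u = mass M c.
Proof. by rewrite exchange_big; apply: (mu_X c).2. Qed.

Lemma muS_inXU : inXU sg.
Proof. by split; [exact: muS_ge0 | exact: muS_sum]. Qed.

Lemma mu_eq0_of_muS u s : sg u = 0 -> mu c s u = 0.
Proof. by move=> sg0; apply: (psumr_eq0P _ sg0) => // s' _; apply: (mu_X c).1. Qed.

Hypotheses (mass_gt0 : 0 < mass M c) (lam_gt0 : 0 < lam M c).
Hypothesis kern_stoch : forall s a, a \in adm M c s ->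
  (forall s2, 0 <= kern M c s a s2) /\ \sum_s2 kern M c s a s2 = 1.

Lemma policy_chain_ge0 (u : pol c) a b : 0 <= policy_chain u a b.
Proof. exact: (kern_stoch (pol_adm u a)).1. Qed.

Lemma policy_chain_sum1 (u : pol c) a : \sum_b policy_chain u a b = 1.
Proof. exact: (kern_stoch (pol_adm u a)).2. Qed.

Lemma sum_fd (u : pol c) : \sum_s fd mu s u = 0.
Proof.
under eq_bigr do rewrite fdE.
rewrite sumrB -!mulr_sumr exchange_big /=.
by under eq_bigr do rewrite -mulr_suml policy_chain_sum1 mul1r; rewrite subrr.
Qed.

Hypothesis rest : forall s (u : pol c), fd mu s u + fr eta rho mu s u = 0.

Lemma muS_balanced : balanced sg (rho c F sg).
Proof.
move=> u; apply/eqP; rewrite -subr_eq0 -sum_fr.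
have sum0 : \sum_s (fd mu s u + fr eta rho mu s u) = 0 by apply: big1 => s _.
by rewrite big_split /= sum_fd add0r in sum0; rewrite sum0.
Qed.

Lemma protocol_rest : excess_payoff rho c \/ pairwise_comparison rho c ->
  optimal_on_support sg F /\
  forall y, (forall u, sg u = 0 -> y u = 0) -> balanced y (rho c F sg).
Proof.
case=> [[tau [[L lip] [tau_ge0 [pos_corr rhoE]]]] | [tau [_ [tau_ge0 [sign rhoE]]]]].
- have rho_tau : rho c F sg =
      fun _ => tau (fun w => F w - (\sum_w' F w' * sg w') / mass M c).
    by apply/funext => u; apply/funext => v; apply: rhoE muS_inXU.
  have bal := muS_balanced; rewrite rho_tau in bal *.
  split=> [u | y].
    exact: (excess_payoff_optimal (F := F) pos_corr mass_gt0 muS_ge0 muS_sum bal).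
  exact: (excess_payoff_balanced_support (F := F) lip tau_ge0 pos_corr
            mass_gt0 muS_ge0 muS_sum bal).
- have rho_tau : rho c F sg = tau F.
    by apply/funext => u; apply/funext => v; apply: rhoE muS_inXU.
  have bal := muS_balanced; rewrite rho_tau in bal *.
  split=> [u | y].
    exact: (pairwise_comparison_optimal (F := F) tau_ge0 sign muS_ge0 bal).
  exact: (pairwise_comparison_balanced_support (F := F) tau_ge0 sign muS_ge0 bal).
Qed.

Lemma fd_eq0_invariant (u : pol c) :
  (forall s, fd mu s u = 0) -> invariant (policy_chain u) (fun s => mu c s u).
Proof.
move=> fd0 t; have /eqP := fd0 t; rewrite fdE subr_eq0 => /eqP.
by apply: mulfI; rewrite gt_eqF.
Qed.

Lemma stationary_invariant (u : pol c) e :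
  stationary u e -> invariant (policy_chain u) e.
Proof.
move=> [_ [_ gen0]] t.
have delta : \sum_s ((t == s) : nat)%:R * e s = e t.
  rewrite (bigD1 t) //= eqxx mul1r big1 ?addr0 // => s /negPf.
  by rewrite eq_sym => ->; rewrite mul0r.
have := gen0 t; under eq_bigr do rewrite -mulrA mulrBl.
by rewrite -mulr_sumr sumrB delta => /eqP; rewrite mulf_eq0 gt_eqF //= subr_eq0 => /eqP.
Qed.

End RestPoint.

Theorem theorem5 (R : realType) (M : model R) (eta : etatype M)
    (rho : protocol M) (Rrev : 'I_(ncls M) -> R) (mu : popstate M) :
  (forall c, 0 < mass M c) ->
  (forall c, 0 < lam M c) ->
  (forall c (s : St M c), exists a, a \in adm M c s) ->
  (forall c (s : St M c) (a : Act M c), a \in adm M c s ->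
     (forall s2, 0 <= kern M c s a s2) /\ \sum_(s2 : St M c) kern M c s a s2 = 1) ->
  (* eta^{c,u} is the stationary distribution of lambda^c (phi^{c,u} - I) *)
  (forall c (u : pol c), stationary u (eta c u)) ->
  A1 M -> A2 M -> (forall c, A3 eta rho c (Rrev c)) ->
  (forall c, excess_payoff rho c \/ pairwise_comparison rho c) ->
  inX mu ->
  (forall c (s : St M c) (u : pol c), fd mu s u + fr eta rho mu s u = 0) ->
  MSNE eta mu.
Proof.
move=> mass_gt0 lam_gt0 _ kern_stoch eta_stat _ unique_rec _ protocol mu_X rest.
split=> // c u.
have [optimal bal_support] :=
  protocol_rest mu_X (mass_gt0 c) (kern_stoch c) (rest c) (protocol c).
split=> [|s]; first exact: optimal.
have fr0 t : fr eta rho mu t u = 0.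
  by apply/fr_balanced/bal_support => u'; exact: mu_eq0_of_muS.
have fd0 t : fd mu t u = 0 by rewrite -(addr0 (fd mu t u)) -(fr0 t) rest.
have mu_inv := fd_eq0_invariant (lam_gt0 c) fd0.
have eta_inv := stationary_invariant (lam_gt0 c) (eta_stat c u).
have [_ [eta_sum1 _]] := eta_stat c u.
by rewrite mulrC (invariant_unique (policy_chain_ge0 (kern_stoch c) u)
  (policy_chain_sum1 (kern_stoch c) u) (unique_rec c u) mu_inv eta_inv eta_sum1 s).
Qed.
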